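(* Let $G,K,L,N_r\ge1$. For each $g\in\{1,\dots,G\}$ let $R_g\ge L$, let $\mathbf U_g\in\mathbb C^{N_r\times R_g}$ have orthonormal columns, let $\boldsymbol\Lambda_g\in\mathbb R^{R_g\times R_g}$ be diagonal with positive diagonal entries, and assume $\mathbf U_g^H\mathbf U_{g'}=\mathbf 0$ for all $g\neq g'$ (disjoint clusters). For $k\in\{1,\dots,K\}$ let $\mathbf W_{g,k}\in\mathbb C^{R_g\times L}$ and $\mathbf H_{g,k}=\mathbf U_g\boldsymbol\Lambda_g^{1/2}\mathbf W_{g,k}$. For $\mathbf A\in\mathbb C^{L\times N_r}$ define $$f(\mathbf A)=\mathrm{tr}(\mathbf A\mathbf A^H)\,\max_{g,k}\mathrm{tr}\big((\mathbf A\mathbf H_{g,k}\mathbf H_{g,k}^H\mathbf A^H)^{-1}\big),$$ with $f(\mathbf A)=+\infty$ if some $\mathbf A\mathbf H_{g,k}\mathbf H_{g,k}^H\mathbf A^H$ is singular. Then for every $\mathbf A\in\mathbb C^{L\times N_r}$ there exist matrices $\mathbf C_g\in\mathbb C^{R_g\times L}$, $g=1,\dots,G$, such that $\mathbf A'=\sum_{g=1}^G\mathbf C_g^H\mathbf U_g^H$ satisfies $f(\mathbf A')\le f(\mathbf A)$. In particular, if $\min_{\mathbf A}f(\mathbf A)$ is attained, then it is attained by a matrix of the form $\sum_{g=1}^G\mathbf C_g^H\mathbf U_g^H$ with $\mathbf C_g\in\mathbb C^{R_g\times L}$.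
   Context: $(\cdot)^H$ denotes conjugate transpose; $\mathrm{tr}$ is the trace. The minimization of $f$ over $\mathbf A$ is the aggregation-beamforming design problem (P2). *)

(* Complex scalars: an arbitrary numClosedFieldType C
   (algebraically closed field with conjugation and order, e.g. algC / the complexes). *)
From HB Require Import structures.
From mathcomp Require Import all_boot all_order all_algebra.
Set Implicit Arguments. Unset Strict Implicit. Unset Printing Implicit Defensive.
Import Order.TTheory GRing.Theory Num.Theory.
Local Open Scope ring_scope.

Definition mxH (C : numClosedFieldType) (m n : nat) (A : 'M[C]_(m, n)) : 'M[C]_(n, m) :=
  (map_mx Num.conj A)^T.

(* Extended values: None stands for +infinity. *)
Definition ext_le (C : numClosedFieldType) (x y : option C) : bool :=
  match y, x with
  | None, _ => true
  | Some _, None => false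
  | Some b, Some a => a <= b
  end.

(* channel H_{g,k} = U_g Lambda_g^{1/2} W_{g,k}, with Lambda_g = diag(lam g),
   Lambda_g^{1/2} = diag(sqrt(lam g)) (principal square root of a positive diagonal matrix) *)
Definition chan (C : numClosedFieldType) (G K L Nr : nat) (R : 'I_G -> nat)
  (U : forall g : 'I_G, 'M[C]_(Nr, R g)) (lam : forall g : 'I_G, 'rV[C]_(R g))
  (W : forall g : 'I_G, 'I_K -> 'M[C]_(R g, L)) (g : 'I_G) (k : 'I_K) : 'M[C]_(Nr, L) :=
  U g *m diag_mx (map_mx sqrtC (lam g)) *m W g k.

Definition fobj (C : numClosedFieldType) (G K L Nr : nat) (R : 'I_G -> nat)
  (U : forall g : 'I_G, 'M[C]_(Nr, R g)) (lam : forall g : 'I_G, 'rV[C]_(R g))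
  (W : forall g : 'I_G, 'I_K -> 'M[C]_(R g, L)) (A : 'M[C]_(L, Nr)) : option C :=
  let M := fun (gk : 'I_G * 'I_K) =>
    A *m chan U lam W gk.1 gk.2 *m mxH (chan U lam W gk.1 gk.2) *m mxH A in
  if [forall gk, M gk \in unitmx] then
    Some (\tr (A *m mxH A) *
          \big[Num.max/0]_(gk : 'I_G * 'I_K) \tr (invmx (M gk)))
  else None.

From HB Require Import structures.
From mathcomp Require Import all_boot all_order all_algebra.
Import Order.TTheory GRing.Theory Num.Theory.
Local Open Scope ring_scope.

(* Let P = \sum_g U_g U_g^H.  Because the U_g have orthonormal
   columns and mutually orthogonal ranges, P is an orthogonal projector
   (P^H = P, P P = P) with P U_g = U_g.  Replacing A by A P, which is of the
   required form \sum_g C_g^H U_g^H with C_g = (A U_g)^H: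
   - leaves every product A H_{g,k} unchanged, since H_{g,k} = U_g (...) and
     P U_g = U_g; hence all matrices A H H^H A^H and their inverses are kept;
   - does not increase the power tr(A A^H), by the Pythagorean identity
     tr(A A^H) = tr(AP (AP)^H) + tr(A(1-P) (A(1-P))^H).
   As the max-term of f is nonnegative, f(A P) <= f(A). *)

Section ConjugateTranspose.
Variable C : numClosedFieldType.

Lemma mxHK m n (X : 'M[C]_(m, n)) : mxH (mxH X) = X.
Proof. by apply/matrixP => i j; rewrite !mxE conjCK. Qed.

Lemma mxHM m n p (X : 'M[C]_(m, n)) (Y : 'M[C]_(n, p)) :
  mxH (X *m Y) = mxH Y *m mxH X.
Proof. by rewrite /mxH map_mxM trmx_mul. Qed.

Lemma mxHD m n (X Y : 'M[C]_(m, n)) : mxH (X + Y) = mxH X + mxH Y.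
Proof. by apply/matrixP => i j; rewrite !mxE rmorphD. Qed.

Lemma mxHB m n (X Y : 'M[C]_(m, n)) : mxH (X - Y) = mxH X - mxH Y.
Proof. by apply/matrixP => i j; rewrite !mxE rmorphB. Qed.

Lemma mxH0 m n : mxH (0 : 'M[C]_(m, n)) = 0.
Proof. by apply/matrixP => i j; rewrite !mxE rmorph0. Qed.

(* tr(X X^H) is the squared Frobenius norm of X, a sum of terms |x_ij|^2. *)
Lemma trace_gram_ge0 m n (X : 'M[C]_(m, n)) : 0 <= \tr (X *m mxH X).
Proof.
rewrite /mxtrace; apply: sumr_ge0 => i _; rewrite mxE.
by apply: sumr_ge0 => j _; rewrite !mxE mul_conjC_ge0.
Qed.

(* The inverse of an invertible Gram matrix Y Y^H is the Gram-type matrix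
   Z^H Z with Z = Y^-1, so its trace is nonnegative too. *)
Lemma trace_inv_gram_ge0 n (Y : 'M[C]_n) :
  Y *m mxH Y \in unitmx -> 0 <= \tr (invmx (Y *m mxH Y)).
Proof.
move=> unitYYH; have /andP [unitY unitYH] : (Y \in unitmx) && (mxH Y \in unitmx).
  by rewrite -unitmx_mul.
set Z := invmx Y.
have ZH : mxH Z = invmx (mxH Y) by rewrite /mxH /Z map_invmx trmx_inv.
have inv_gram : invmx (Y *m mxH Y) = mxH Z *m Z.
  have right_inv : (Y *m mxH Y) *m (mxH Z *m Z) = 1%:M.
    by rewrite ZH mulmxA -(mulmxA Y) (mulmxV unitYH) mulmx1 /Z (mulmxV unitY).
  by rewrite -[LHS]mulmx1 -right_inv (mulmxA (invmx _)) (mulVmx unitYYH) mul1mx.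
by rewrite inv_gram mxtrace_mulC trace_gram_ge0.
Qed.

(* Pythagoras for an orthogonal projector P: the power of A splits into the
   power of A P and the power of A (1 - P); in particular it dominates the
   power of A P. *)
Lemma trace_gram_proj_le m n (P : 'M[C]_n) (A : 'M[C]_(m, n)) :
  mxH P = P -> P *m P = P -> \tr (A *m P *m mxH (A *m P)) <= \tr (A *m mxH A).
Proof.
move=> PH PP; set B := A - A *m P.
have pythagoras : \tr (A *m mxH A) = \tr (A *m P *m mxH (A *m P)) + \tr (B *m mxH B).
  rewrite -mxtraceD; congr (\tr _).
  rewrite /B mxHM PH mxHB mxHM PH mulmxBl !mulmxBr !mulmxA -(mulmxA A P P) PP.
  by rewrite subrr subr0 addrC subrK.
by rewrite pythagoras lerDl trace_gram_ge0.
Qed.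

End ConjugateTranspose.

Lemma ext_le_trans (C : numClosedFieldType) (x y z : option C) :
  ext_le x y -> ext_le y z -> ext_le x z.
Proof. by case: z => [c|] //; case: y => [b|] //; case: x => [a|] //=; apply: le_trans. Qed.

Lemma bigmax_ge0 (C : numClosedFieldType) (I : finType) (F : I -> C) :
  (forall i, 0 <= F i) -> 0 <= \big[Num.max/0]_(i : I) F i.
Proof. by move=> F_ge0; apply: (big_ind (fun x => 0 <= x)) => // x y; rewrite /Num.max; case: ifP. Qed.

Section ClusterProjector.
Variables (C : numClosedFieldType) (G Nr : nat) (R : 'I_G -> nat).
Variable U : forall g : 'I_G, 'M[C]_(Nr, R g).
Hypothesis U_orthonormal : forall g, mxH (U g) *m U g = 1%:M.
Hypothesis U_disjoint : forall g g' : 'I_G, g != g' -> mxH (U g) *m U g' = 0.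

Definition cluster_proj : 'M[C]_Nr := \sum_(g < G) U g *m mxH (U g).

Lemma cluster_projU g : cluster_proj *m U g = U g.
Proof.
rewrite /cluster_proj mulmx_suml (bigD1 g) //= big1 ?addr0 => [|g' g'g].
  by rewrite -mulmxA U_orthonormal mulmx1.
by rewrite -mulmxA U_disjoint ?mulmx0.
Qed.

Lemma cluster_proj_herm : mxH cluster_proj = cluster_proj.
Proof.
apply: (big_rec2 (fun a b => mxH a = b)) => [|g a b _ <-]; first exact: mxH0.
by rewrite mxHD mxHM mxHK.
Qed.

Lemma cluster_proj_idem : cluster_proj *m cluster_proj = cluster_proj.
Proof.
by rewrite {2}/cluster_proj mulmx_sumr; apply: eq_bigr => g _; rewrite mulmxA cluster_projU.
Qed.

Lemma cluster_proj_form L (A : 'M[C]_(L, Nr)) :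
  \sum_(g < G) mxH (mxH (A *m U g)) *m mxH (U g) = A *m cluster_proj.
Proof. by rewrite mulmx_sumr; apply: eq_bigr => g _; rewrite mxHK mulmxA. Qed.

End ClusterProjector.

(* f is monotone in the power tr(A A^H) once the products A H_{g,k} are fixed:
   the invertibility pattern and the max-term only depend on those products. *)
Lemma fobj_le_same_channels (C : numClosedFieldType) (G K L Nr : nat)
  (R : 'I_G -> nat) (U : forall g : 'I_G, 'M[C]_(Nr, R g))
  (lam : forall g : 'I_G, 'rV[C]_(R g)) (W : forall g : 'I_G, 'I_K -> 'M[C]_(R g, L))
  (A A' : 'M[C]_(L, Nr)) :
  (forall g k, A' *m chan U lam W g k = A *m chan U lam W g k) ->
  \tr (A' *m mxH A') <= \tr (A *m mxH A) ->
  ext_le (fobj U lam W A') (fobj U lam W A).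
Proof.
move=> same_chan power_le.
have same_gram (gk : 'I_G * 'I_K) :
    A' *m chan U lam W gk.1 gk.2 *m mxH (chan U lam W gk.1 gk.2) *m mxH A'
    = A *m chan U lam W gk.1 gk.2 *m mxH (chan U lam W gk.1 gk.2) *m mxH A.
  by rewrite -[LHS]mulmxA -[RHS]mulmxA -!mxHM same_chan.
rewrite /fobj; under eq_forallb => gk do rewrite same_gram.
under eq_bigr => gk _ do rewrite same_gram.
case: ifP => //= /forallP all_unit; apply: ler_wpM2r power_le.
apply: bigmax_ge0 => gk; have := all_unit gk.
by rewrite -mulmxA -mxHM; apply: trace_inv_gram_ge0.
Qed.

Lemma fobj_cluster_proj_le (C : numClosedFieldType) (G K L Nr : nat)
  (R : 'I_G -> nat) (U : forall g : 'I_G, 'M[C]_(Nr, R g))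
  (U_orthonormal : forall g, mxH (U g) *m U g = 1%:M)
  (U_disjoint : forall g g' : 'I_G, g != g' -> mxH (U g) *m U g' = 0)
  (lam : forall g : 'I_G, 'rV[C]_(R g)) (W : forall g : 'I_G, 'I_K -> 'M[C]_(R g, L))
  (A : 'M[C]_(L, Nr)) :
  ext_le (fobj U lam W (\sum_(g < G) mxH (mxH (A *m U g)) *m mxH (U g)))
         (fobj U lam W A).
Proof.
rewrite cluster_proj_form; apply: fobj_le_same_channels => [g k|].
  by rewrite /chan !mulmxA -(mulmxA A) cluster_projU.
by apply: trace_gram_proj_le; [apply: cluster_proj_herm | apply: cluster_proj_idem].
Qed.

Theorem proposition1 (C : numClosedFieldType) (G K L Nr : nat)
  (hG : (0 < G)%N) (hK : (0 < K)%N) (hL : (0 < L)%N) (hN : (0 < Nr)%N)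
  (R : 'I_G -> nat) (hR : forall g, (L <= R g)%N)
  (U : forall g : 'I_G, 'M[C]_(Nr, R g))
  (hU : forall g, mxH (U g) *m U g = 1%:M)
  (lam : forall g : 'I_G, 'rV[C]_(R g))
  (hlam : forall g i, 0 < lam g 0 i)
  (hdisj : forall g g' : 'I_G, g != g' -> mxH (U g) *m U g' = 0)
  (W : forall g : 'I_G, 'I_K -> 'M[C]_(R g, L)) :
  (forall A : 'M[C]_(L, Nr),
     exists Cm : forall g : 'I_G, 'M[C]_(R g, L),
       ext_le (fobj U lam W (\sum_(g < G) mxH (Cm g) *m mxH (U g))) (fobj U lam W A))
  /\
  ((exists A0 : 'M[C]_(L, Nr), forall A, ext_le (fobj U lam W A0) (fobj U lam W A)) ->
     exists Cm : forall g : 'I_G, 'M[C]_(R g, L),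
       forall A, ext_le (fobj U lam W (\sum_(g < G) mxH (Cm g) *m mxH (U g))) (fobj U lam W A)).
Proof.
split=> [A | [A0 A0_min]].
  by exists (fun g => mxH (A *m U g)); apply: fobj_cluster_proj_le.
exists (fun g => mxH (A0 *m U g)) => A.
by apply: ext_le_trans (A0_min A); apply: fobj_cluster_proj_le.
Qed.
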